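(* The vector space $M(\beta)/(Z_1,\dots,Z_d)M(\beta)$ is finite dimensional.
   Context: $N\cong\mathbb Z^d$ lattice, $M=\mathrm{Hom}(N,\mathbb Z)$ with basis $m_1,\dots,m_d$; $\mathcal A=\{v_1,\dots,v_n\}\subset N$ generating $N$ with a homomorphism $\mathrm h:N\to\mathbb Z$, $\mathrm h(v_j)=1$; $K=\mathbb R_{\ge0}\mathrm{Conv}(\mathcal A)$; $\Sigma$ the simplicial fan supported on $K$ from a regular triangulation of $\mathrm{Conv}(\mathcal A)$ with vertices in $\mathcal A$; $\beta\in N$. $\mathbb C[K,\Sigma]$: basis $x^w$ ($w\in K\cap N$), $x^{w_1}x^{w_2}=x^{w_1+w_2}$ if a cone of $\Sigma$ contains both, else $0$. $Z_i=\sum_{j:\mathbb R_{\ge0}v_j\in\Sigma}\langle m_i,v_j\rangle x^{v_j}$. $\mathrm{Box}(\Sigma)$: $v\in N$, $v=\sum q_jv_j$, $0\le q_j<1$, $q_j=0$ unless $v_j$ spans a ray of one fixed maximal cone; $\sigma(v)$ smallest cone containing $v$. $R$: subring generated by $x^{v_j}$, $\mathbb R_{\ge0}v_j\in\Sigma$. $M(\beta)$: $R$-submodule generated by $x^v\prod_{j:r_j<0,\ \mathbb R_{\ge0}v_j\in\Sigma,\ \mathbb R_{\ge0}v_j\not\prec\sigma(v)}x^{v_j}$ over all $v\in\mathrm{Box}(\Sigma)$, $r\in\mathbb Z^n$ with $v+\sum r_jv_j=\beta$, $r_j\ge0$ whenever $\mathbb R_{\ge0}v_j\notin\Sigma$.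 *)

From HB Require Import structures.
From mathcomp Require Import all_boot all_order all_algebra.
From mathcomp Require Import boolp reals complex.
Set Implicit Arguments. Unset Strict Implicit. Unset Printing Implicit Defensive.
Import Order.TTheory GRing.Theory Num.Theory.
Local Open Scope ring_scope.

(* Lattice N = Z^d as 'rV[int]_d; the dual basis m_1..m_d of M is the
   coordinate basis, so <m_i, w> = w 0 i.  A = {v_0, ..., v_(n-1)}.
   The triangulation is given by its set T of maximal simplices (index sets). *)
Section Fan.
Variables (d n : nat) (v : 'I_n -> 'rV[int]_d) (T : {set {set 'I_n}}).

Definition ratv (w : 'rV[int]_d) : 'rV[rat]_d := map_mx (fun z : int => z%:~R) w.

Definition dotQ (p x : 'rV[rat]_d) : rat := \sum_(i < d) p 0 i * x 0 i.

Definition in_coneQ (F : {set 'I_n}) (x : 'rV[rat]_d) : Prop :=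
  exists c : 'I_n -> rat, (forall j, 0 <= c j) /\ (forall j, j \notin F -> c j = 0)
    /\ x = \sum_j c j *: ratv (v j).

Definition in_cone (F : {set 'I_n}) (w : 'rV[int]_d) : Prop := in_coneQ F (ratv w).

Definition in_K (w : 'rV[int]_d) : Prop := in_cone setT w.

(* cones of Sigma are the cones over faces F of maximal simplices S in T *)
Definition is_cone (F : {set 'I_n}) : bool := [exists S in T, F \subset S].

Definition is_ray (j : 'I_n) : bool := [exists S in T, j \in S].

Definition common_cone (w1 w2 : 'rV[int]_d) : Prop :=
  exists S, S \in T /\ in_cone S w1 /\ in_cone S w2.

Definition smallest_cone (F : {set 'I_n}) (w : 'rV[int]_d) : Prop :=
  is_cone F /\ in_cone F w /\
  forall G, is_cone G -> in_cone G w -> forall x, in_coneQ F x -> in_coneQ G x.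

Definition ray_face (j : 'I_n) (w : 'rV[int]_d) : Prop :=
  exists F, smallest_cone F w /\ j \in F.

Definition in_box (w : 'rV[int]_d) : Prop :=
  exists S, S \in T /\ exists q : 'I_n -> rat,
    (forall j, 0 <= q j < 1) /\ (forall j, j \notin S -> q j = 0)
    /\ ratv w = \sum_j q j *: ratv (v j).

(* Hypotheses on A: a set (v injective) generating N, lying on h = 1 *)
Definition good_config : Prop :=
  injective v /\
  (forall w : 'rV[int]_d, exists r : 'I_n -> int, w = \sum_j r j *: v j) /\
  (exists hh : 'rV[int]_d, forall j, \sum_(i < d) hh 0 i * v j 0 i = 1).

Definition regular_triangulation : Prop :=
  (forall S, S \in T -> #|S| = d /\
     forall c : 'I_n -> rat, (forall j, j \notin S -> c j = 0) ->
       \sum_j c j *: ratv (v j) = 0 -> forall j, c j = 0) /\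
  (* they cover Conv(A), i.e. the cones cover K *)
  (forall x, in_coneQ setT x -> exists S, S \in T /\ in_coneQ S x) /\
  (forall S S', S \in T -> S' \in T -> forall x,
     in_coneQ S x -> in_coneQ S' x -> in_coneQ (S :&: S') x) /\
  (* regularity: induced by a height function omega *)
  (exists omega : 'I_n -> rat, forall S, S \in T -> exists psi : 'rV[rat]_d,
     forall j, (j \in S -> dotQ psi (ratv (v j)) = omega j) /\
               (j \notin S -> dotQ psi (ratv (v j)) < omega j)).

(* The ring C[K,Sigma] over a coefficient field C: elements are represented
   by finite formal combinations (lists of (coefficient, exponent)); two
   representations denote the same element iff their coefficient functions agree. *)
Variable C : fieldType.

Definition elt := seq (C * 'rV[int]_d).

Definition coef (f : elt) (w : 'rV[int]_d) : C := \sum_(p <- f | p.2 == w) p.1.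

Definition mono (w : 'rV[int]_d) : elt := [:: (1, w)].

Definition eadd (f g : elt) : elt := f ++ g.

Definition escale (c : C) (f : elt) : elt := [seq (c * p.1, p.2) | p <- f].

Definition emul (f g : elt) : elt :=
  [seq (p.1 * q.1, p.2 + q.2) | p <- f,
     q <- [seq q <- g | `[< common_cone p.2 q.2 >]]].

Definition eeq (f g : elt) : Prop := forall w, coef f w = coef g w.

Inductive inR : elt -> Prop :=
| inR_const (c : C) : inR [:: (c, 0)]
| inR_ray j : is_ray j -> inR (mono (v j))
| inR_add f g : inR f -> inR g -> inR (eadd f g)
| inR_mul f g : inR f -> inR g -> inR (emul f g)
| inR_ext f g : inR f -> eeq f g -> inR g.

Definition gen (beta : 'rV[int]_d) (f : elt) : Prop :=
  exists (w : 'rV[int]_d) (r : 'I_n -> int),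
    in_box w /\ w + \sum_j r j *: v j = beta /\
    (forall j, ~~ is_ray j -> 0 <= r j) /\
    f = foldr emul (mono w)
          [seq mono (v j) | j <- enum 'I_n &
             (r j < 0) && is_ray j && ~~ `[< ray_face j w >]].

Inductive inM (beta : 'rV[int]_d) : elt -> Prop :=
| inM_zero : inM beta [::]
| inM_gen f : gen beta f -> inM beta f
| inM_add f g : inM beta f -> inM beta g -> inM beta (eadd f g)
| inM_mul r f : inR r -> inM beta f -> inM beta (emul r f)
| inM_ext f g : inM beta f -> eeq f g -> inM beta g.

Definition Zi (i : 'I_d) : elt :=
  [seq ((v j 0 i)%:~R, v j) | j <- enum 'I_n & is_ray j].

(* M(beta)/(Z_1,...,Z_d)M(beta) is finite dimensional over C: finitely many
   elements of M(beta) span it modulo (Z_1,...,Z_d)M(beta). *)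
Definition quotient_finite_dim (beta : 'rV[int]_d) : Prop :=
  exists (k : nat) (b : 'I_k -> elt),
    (forall t, inM beta (b t)) /\
    forall f, inM beta f ->
      exists (c : 'I_k -> C) (ms : 'I_d -> elt),
        (forall i, inM beta (ms i)) /\
        eeq f (flatten ([seq escale (c t) (b t) | t <- enum 'I_k] ++
                        [seq emul (Zi i) (ms i) | i <- enum 'I_d])).

End Fan.

From Pilot Require Import Defs.
From HB Require Import structures.
From mathcomp Require Import all_boot all_order all_algebra.
From mathcomp Require Import boolp reals complex.
From mathcomp Require Import zify.
Import Order.TTheory GRing.Theory Num.Theory.
Local Open Scope ring_scope.

(* Box points have bounded coordinates, so M(beta) is generated over R by
   finitely many elements, and R is generated by the ray monomials
   x_j = x^(v_j).  It therefore suffices that x_j^#|T| M(beta) lies in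
   (Z_1, ..., Z_d) M(beta): then a generator times a monomial with all
   exponents below #|T| gives a finite spanning set of the quotient.
   For a maximal simplex S, a linear form dual to v_j on S writes
   x_j = sum_i mu_i Z_i + P_S, where P_S only involves rays outside S;
   since products in C[K,Sigma] stay in a common cone, multiplying by P_S
   moves every monomial off the cone over S.  Doing this once for every
   S in T leaves no monomial in any cone, that is, zero. *)

Section FiniteQuotient.
Set Implicit Arguments. Unset Strict Implicit.

Variables (d n : nat) (v : 'I_n -> 'rV[int]_d) (T : {set {set 'I_n}}).
Variable C : numFieldType.

Local Notation elt := (elt d C).
Local Notation coef := (@coef d C).
Local Notation emul := (@emul d n v T C).
Local Notation mono := (@mono d C).
Local Notation escale := (@escale d C).
Local Notation eeq := (@eeq d C).
Local Notation ratv := (@ratv d).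
Local Notation in_cone := (in_cone v).
Local Notation in_coneQ := (in_coneQ v).
Local Notation cc := (fun a b => `[< common_cone v T a b >]).

(** * Coefficients of sums and products *)

Lemma coefE (f : elt) w : coef f w = \sum_(p <- f) (if p.2 == w then p.1 else 0).
Proof. by rewrite /coef big_mkcond. Qed.

Lemma coef_nil w : coef [::] w = 0.
Proof. by rewrite /coef big_nil. Qed.

Lemma coef_cat (f g : elt) w : coef (f ++ g) w = coef f w + coef g w.
Proof. by rewrite /coef big_cat. Qed.

Lemma coef_flatten (L : seq elt) w : coef (flatten L) w = \sum_(l <- L) coef l w.
Proof. by rewrite /coef big_flatten. Qed.

Lemma coef_escale c (f : elt) w : coef (escale c f) w = c * coef f w.
Proof.
rewrite !coefE big_map mulr_sumr; apply: eq_bigr => p _.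
by case: ifP; rewrite ?mulr0.
Qed.

Lemma coef_mono u w : coef (mono u) w = (u == w)%:R.
Proof. by rewrite coefE big_seq1; case: eqP. Qed.

Lemma big_emul (F : C * 'rV[int]_d -> C) (f g : elt) :
  \sum_(e <- emul f g) F e =
  \sum_(p <- f) \sum_(q <- g) (if cc p.2 q.2 then F (p.1 * q.1, p.2 + q.2) else 0).
Proof.
elim: f => [|p f IH] /=; first by rewrite !big_nil.
by rewrite big_cat big_cons IH big_map big_filter big_mkcond.
Qed.

Lemma coef_emul (f g : elt) w : coef (emul f g) w =
  \sum_(p <- f) \sum_(q <- g) (if cc p.2 q.2 && (p.2 + q.2 == w) then p.1 * q.1 else 0).
Proof.
rewrite coefE big_emul; apply: eq_bigr => p _; apply: eq_bigr => q _.
by case: ifP => //=; case: ifP.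
Qed.

Lemma common_cone_sym a b : cc a b = cc b a.
Proof. by apply/asboolP/asboolP => -[S [HS [H1 H2]]]; exists S. Qed.

Lemma emulC (f g : elt) : eeq (emul f g) (emul g f).
Proof.
move=> w; rewrite !coef_emul exchange_big; apply: eq_bigr => q _.
by apply: eq_bigr => p _; rewrite common_cone_sym addrC mulrC.
Qed.

Lemma coef_emulr (f g : elt) w : coef (emul f g) w =
  \sum_(p <- f) p.1 * (if cc p.2 (w - p.2) then coef g (w - p.2) else 0).
Proof.
rewrite coef_emul; apply: eq_bigr => p _.
have shift q : (p.2 + q.2 == w) = (q.2 == w - p.2).
  by apply/eqP/eqP => [<-|->]; [rewrite (addrC p.2) addrK | rewrite addrC subrK].
case: ifP => H.
  rewrite coefE mulr_sumr; apply: eq_bigr => q _; rewrite shift.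
  by case: eqP => [->|]; rewrite ?H ?andbF ?mulr0.
rewrite mulr0; apply: big1 => q _; rewrite shift.
by case: eqP => [->|]; rewrite ?H ?andbF.
Qed.

Lemma coef_emull (f g : elt) w : coef (emul f g) w =
  \sum_(q <- g) q.1 * (if cc q.2 (w - q.2) then coef f (w - q.2) else 0).
Proof. by rewrite emulC coef_emulr. Qed.

Lemma eeq_emulr (f g g' : elt) : eeq g g' -> eeq (emul f g) (emul f g').
Proof. by move=> E w; rewrite !coef_emulr; apply: eq_bigr => p _; rewrite E. Qed.

Lemma eeq_emull (f f' g : elt) : eeq f f' -> eeq (emul f g) (emul f' g).
Proof. by move=> E w; rewrite !coef_emull; apply: eq_bigr => p _; rewrite E. Qed.

Lemma coef_emul_catr (f g h : elt) w :
  coef (emul f (g ++ h)) w = coef (emul f g) w + coef (emul f h) w.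
Proof.
rewrite !coef_emulr -big_split; apply: eq_bigr => p _.
by case: ifP => _; rewrite /= ?coef_cat ?mulrDr ?mulr0 ?addr0.
Qed.

Lemma coef_emul_catl (f g h : elt) w :
  coef (emul (f ++ g) h) w = coef (emul f h) w + coef (emul g h) w.
Proof. by rewrite emulC coef_emul_catr !(emulC h). Qed.

Lemma coef_emul_scaler (f g : elt) c w :
  coef (emul f (escale c g)) w = c * coef (emul f g) w.
Proof.
rewrite !coef_emulr mulr_sumr; apply: eq_bigr => p _.
by case: ifP => _; rewrite ?coef_escale ?mulr0 // mulrCA.
Qed.

Lemma coef_emul_scalel (f g : elt) c w :
  coef (emul (escale c f) g) w = c * coef (emul f g) w.
Proof. by rewrite emulC coef_emul_scaler emulC. Qed.

Lemma coef_emul0 (f : elt) w : coef (emul f [::]) w = 0.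
Proof. by rewrite coef_emul big1 // => p _; rewrite big_nil. Qed.

Lemma coef_emul_flattenr (f : elt) (L : seq elt) w :
  coef (emul f (flatten L)) w = \sum_(l <- L) coef (emul f l) w.
Proof.
elim: L => [|l L IH] /=; first by rewrite big_nil coef_emul0.
by rewrite coef_emul_catr IH big_cons.
Qed.

Lemma coef_emul_flattenl (f : elt) (L : seq elt) w :
  coef (emul (flatten L) f) w = \sum_(l <- L) coef (emul l f) w.
Proof. by rewrite emulC coef_emul_flattenr; apply: eq_bigr => l _; exact: emulC. Qed.

(** * Cones of the triangulation and associativity *)

Definition free_vectors (S : {set 'I_n}) : Prop :=
  forall c : 'I_n -> rat, (forall j, j \notin S -> c j = 0) ->
    \sum_j c j *: ratv (v j) = 0 -> forall j, c j = 0.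

Hypothesis T_free : forall S, S \in T -> free_vectors S.
Hypothesis T_meet : forall S S', S \in T -> S' \in T -> forall x,
  in_coneQ S x -> in_coneQ S' x -> in_coneQ (S :&: S') x.

Lemma ratvD a b : ratv (a + b) = ratv a + ratv b.
Proof. by apply/matrixP => i j; rewrite !mxE intrD. Qed.

Lemma in_cone0 (S : {set 'I_n}) : in_cone S 0.
Proof.
exists (fun _ => 0); do 2!split => //.
by rewrite big1 => [|j _]; [apply/matrixP => i j; rewrite !mxE | rewrite scale0r].
Qed.

Lemma in_coneD (S : {set 'I_n}) a b : in_cone S a -> in_cone S b -> in_cone S (a + b).
Proof.
move=> [ca [ca0 [caS Ea]]] [cb [cb0 [cbS Eb]]].
exists (fun j => ca j + cb j); split; first by move=> j; rewrite addr_ge0.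
split; first by move=> j jS; rewrite caS // cbS // addr0.
by rewrite ratvD Ea Eb -big_split; apply: eq_bigr => j _; rewrite scalerDl.
Qed.

Lemma in_cone_vec (S : {set 'I_n}) k : k \in S -> in_cone S (v k).
Proof.
move=> kS; exists (fun j => (j == k)%:R); split; first by move=> j; rewrite ler0n.
split; first by move=> j jS; case: eqP => // E; rewrite E kS in jS.
rewrite (bigD1 k) //= eqxx scale1r big1 ?addr0 // => j /negPf ->.
by rewrite scale0r.
Qed.

(* Cone coordinates on a simplex are unique, so those of [a + b] are the sums
   of those of [a] and [b]; they vanish off [S0] only if both summands do. *)
Lemma in_cone_summand (S1 S0 : {set 'I_n}) a b : S1 \in T -> S0 \in T ->
  in_cone S1 a -> in_cone S1 b -> in_cone S0 (a + b) -> in_cone S0 a.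
Proof.
move=> HS1 HS0 Ha Hb Hab.
have [e [e0 [eS Ee]]] := T_meet HS1 HS0 (in_coneD Ha Hb) Hab.
move: Ha Hb => [ca [ca0 [caS Ea]]] [cb [cb0 [cbS Eb]]].
have coord j : ca j + cb j - e j = 0.
  apply: (T_free HS1 (c := fun j => ca j + cb j - e j)) => [k kS|].
    by rewrite caS // cbS // eS ?addr0 ?subrr // in_setI negb_and kS.
  under eq_bigr do rewrite scalerBl scalerDl.
  by rewrite sumrB big_split /= -Ea -Eb -Ee ratvD subrr.
exists ca; split => //; split => // j jS0.
have ej : e j = 0 by apply: eS; rewrite in_setI negb_and jS0 orbT.
by move/eqP: (coord j); rewrite ej subr0 paddr_eq0 ?ca0 ?cb0 // => /andP [/eqP -> _].
Qed.

Lemma common_cone_assoc a b c :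
  cc a b && cc (a + b) c = cc b c && cc a (b + c).
Proof.
apply/andP/andP => -[/asboolP [S1 [H1 [Ha Hb]]] /asboolP [S2 [H2 [Hab Hc]]]].
  have Ha2 := in_cone_summand H1 H2 Ha Hb Hab.
  have Hb2 : in_cone S2 b by apply: (in_cone_summand H1 H2 Hb Ha); rewrite addrC.
  by split; apply/asboolP; exists S2; do 2!split => //; apply: in_coneD.
have Hb2 := in_cone_summand H1 H2 Ha Hb Hc.
have Hc2 : in_cone S2 c by apply: (in_cone_summand H1 H2 Hb Ha); rewrite addrC.
by split; apply/asboolP; exists S2; do 2!split => //; apply: in_coneD.
Qed.

Lemma ray_notin_cone (S S' : {set 'I_n}) k : S \in T -> S' \in T ->
  k \in S' -> k \notin S -> ~ in_cone S (v k).
Proof.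
move=> HS HS' kS' kS Hk.
have [e [e0 [eS Ee]]] := T_meet HS HS' Hk (in_cone_vec kS').
have coord j : e j - (j == k)%:R = 0.
  apply: (T_free HS' (c := fun j => e j - (j == k)%:R)) => [j' j'S|].
    rewrite eS; last by rewrite in_setI negb_and j'S orbT.
    by case: eqP => // E; rewrite E kS' in j'S.
  under eq_bigr do rewrite scalerBl.
  rewrite sumrB -Ee (bigD1 k) //= eqxx scale1r big1 ?addr0 ?subrr // => i /negPf ->.
  by rewrite scale0r.
move/eqP: (coord k); rewrite eqxx eS ?sub0r ?oppr_eq0 ?oner_eq0 //.
by rewrite in_setI negb_and kS.
Qed.

Lemma emulA (f g h : elt) : eeq (emul (emul f g) h) (emul f (emul g h)).
Proof.
move=> w; rewrite [LHS]coef_emul big_emul [RHS]coef_emul; apply: eq_bigr => p _.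
rewrite big_emul; apply: eq_bigr => q _.
case E1: (cc p.2 q.2).
  apply: eq_bigr => r _ /=; have := common_cone_assoc p.2 q.2 r.2.
  by rewrite E1 /=; case: (cc q.2 r.2) => /= ->; rewrite ?addrA ?mulrA.
apply/esym/big1 => r _ /=; have := common_cone_assoc p.2 q.2 r.2.
by rewrite E1 /=; case: (cc q.2 r.2) => //= <-.
Qed.

Lemma emulCA (f g h : elt) : eeq (emul f (emul g h)) (emul g (emul f h)).
Proof. by move=> w; rewrite -emulA (eeq_emull _ (emulC f g)) emulA. Qed.

(** * Dual linear forms on a simplex *)

Definition simplex_mx (S : {set 'I_n}) : 'M[rat]_(#|S|, d) :=
  \matrix_(r < #|S|) ratv (v (enum_val r)).

Lemma row_free_simplex_mx S : free_vectors S -> row_free (simplex_mx S).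
Proof.
move=> Sfree; apply: inj_row_free => x xA0.
pose c k := \sum_r (enum_val r == k)%:R * x 0 r.
have c_enum r : c (enum_val r) = x 0 r.
  rewrite /c (bigD1 r) //= eqxx mul1r big1 ?addr0 // => r' /negPf.
  by rewrite (inj_eq enum_val_inj) => ->; rewrite mul0r.
have c0 : forall k, c k = 0.
  apply: (Sfree c) => [k kS|].
    rewrite /c big1 // => r _; case: eqP => [E|]; last by rewrite mul0r.
    by rewrite -E enum_valP in kS.
  rewrite -[RHS]xA0 mulmx_sum_row; under eq_bigr do rewrite /c scaler_suml.
  rewrite exchange_big /=; apply: eq_bigr => r _; rewrite rowK.
  rewrite (bigD1 (enum_val r)) //= eqxx mul1r big1 ?addr0 // => k /negPf.
  by rewrite eq_sym => ->; rewrite mul0r scale0r.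
by apply/rowP => r; rewrite !mxE -c_enum c0.
Qed.

(* The transposed matrix has full row rank, so every row vector lies in its
   row space. *)
Lemma free_dual_form S j : free_vectors S ->
  exists mu : 'I_d -> rat, forall k, k \in S ->
    \sum_i mu i * (v k 0 i)%:~R = (k == j)%:R.
Proof.
move=> Sfree.
have fullT : row_full (simplex_mx S)^T.
  by rewrite /row_full mxrank_tr; exact: row_free_simplex_mx.
have [D E] := submxP (submx_full (\row_r ((enum_val r == j)%:R : rat)) fullT).
exists (D 0) => k kS.
move/matrixP: E => /(_ 0 (enum_rank_in kS k)); rewrite !mxE enum_rankK_in // => ->.
by apply: eq_bigr => i _; rewrite !mxE enum_rankK_in.
Qed.

Lemma free_dual_form_ratr S j : free_vectors S ->
  exists mu : 'I_d -> C, forall k, k \in S ->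
    \sum_i mu i * (v k 0 i)%:~R = (k == j)%:R.
Proof.
move=> /(free_dual_form j) [mu Hmu]; exists (fun i => ratr (mu i)) => k kS.
have := congr1 (@ratr C) (Hmu k kS); rewrite rmorph_sum rmorph_nat => <-.
by apply: eq_bigr => i _; rewrite rmorphM /= ratr_int.
Qed.

(** * Supports and the module structure *)

Variable beta : 'rV[int]_d.

Local Notation inR := (@inR d n v T C).
Local Notation inM := (@inM d n v T C beta).
Local Notation Zi := (@Zi d n v T C).

Definition supported (f : elt) : Prop :=
  forall w, coef f w != 0 -> exists2 S, S \in T & in_cone S w.

Lemma coef_neq0_mem (f : elt) w : coef f w != 0 -> exists2 p, p \in f & p.2 = w.
Proof.
move=> nz; have /hasP [p pf /eqP pw] : has (fun p => p.2 == w) f.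
  apply: contraNT nz => /hasPn fw; rewrite /coef big1_seq // => p /andP [pw pf].
  by rewrite (negPf (fw p pf)) in pw.
by exists p.
Qed.

Lemma mem_emul (f g : elt) p : p \in emul f g -> exists a b, [/\ a \in f, b \in g,
  cc a.2 b.2 & p = (a.1 * b.1, a.2 + b.2)].
Proof.
move=> /flattenP [s /mapP [a af ->]] /mapP [b].
by rewrite mem_filter => /andP [ab bg] ->; exists a, b.
Qed.

Lemma supported_emul (f g : elt) : supported (emul f g).
Proof.
move=> w /coef_neq0_mem [p /mem_emul [a [b [_ _ /asboolP [S [HS [Ha Hb]]] ->]]] <-].
by exists S => //; apply: in_coneD.
Qed.

Lemma supported_gen f : gen v T beta f -> supported f.
Proof.
move=> [w [r [[S [HS [q [q01 [qS Eq]]]]] [_ [_ ->]]]]].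
case: [seq _ | _ <- _ & _] => [|x L] /=; last exact: supported_emul.
move=> w'; rewrite coef_mono; case: (eqVneq w w') => [<- _|_]; last by rewrite eqxx.
exists S => //; exists q; split => [j|//].
by case/andP: (q01 j).
Qed.

Lemma inM_supported f : inM f -> supported f.
Proof.
elim=> {f} [w|f /supported_gen //|f g _ Hf _ Hg|r f _ _ _|f g _ Hf E].
- by rewrite coef_nil eqxx.
- move=> w; rewrite coef_cat; case: (eqVneq (coef f w) 0) => [->|/Hf //].
  by rewrite add0r; apply: Hg.
- exact: supported_emul.
- by move=> w; rewrite -E; apply: Hf.
Qed.

Lemma emul_const c (f : elt) : supported f -> eeq (emul [:: (c, 0)] f) (escale c f).
Proof.
move=> Hf w; rewrite coef_emulr coef_escale big_seq1 /= subr0.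
case: ifP => // /negP Hw; suff -> : coef f w = 0 by rewrite mulr0.
apply/eqP; apply: contraT => /Hf [S HS wS]; case: Hw; apply/asboolP.
by exists S; do 2!split => //; exact: in_cone0.
Qed.

Lemma inM_escale c f : inM f -> inM (escale c f).
Proof.
move=> Hf; apply: inM_ext (inM_mul (inR_const v T c) Hf) _.
exact: emul_const (inM_supported Hf).
Qed.

Lemma inR_term c k : is_ray T k -> inR [:: (c, v k)].
Proof.
move=> Hk; apply: inR_ext (inR_mul (inR_const v T c) (inR_ray v C Hk)) _.
have -> : [:: (c, v k)] = escale c (mono (v k)) by rewrite /Defs.escale /= mulr1.
apply: emul_const => w; rewrite coef_mono.
case: (eqVneq (v k) w) => [<- _|_]; last by rewrite eqxx.
by move/existsP: Hk => [S /andP [HS kS]]; exists S => //; apply: in_cone_vec.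
Qed.

Lemma inR_seq (L : elt) : (forall p, p \in L -> inR [:: p]) -> inR L.
Proof.
elim: L => [|p L IH] H.
  apply: (inR_ext (inR_const v T 0)) => w.
  by rewrite coef_nil coefE big_seq1; case: ifP.
apply: (@inR_add _ _ _ _ _ [:: p] L); first by apply: H; rewrite inE eqxx.
by apply: IH => q qL; apply: H; rewrite inE qL orbT.
Qed.

(** * High powers of a ray monomial lie in (Z_1, ..., Z_d) M(beta) *)

Lemma coef_Zi i w :
  coef (Zi i) w = \sum_(k | is_ray T k) (if v k == w then (v k 0 i)%:~R else 0).
Proof. by rewrite coefE /Zi big_map big_filter big_enum_cond. Qed.

Definition Zsum (ms : 'I_d -> elt) : elt := flatten [seq emul (Zi i) (ms i) | i <- enum 'I_d].

Lemma coef_Zsum ms w : coef (Zsum ms) w = \sum_i coef (emul (Zi i) (ms i)) w.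
Proof. by rewrite coef_flatten big_map big_enum. Qed.

Lemma coef_emul_Zsum g ms w :
  coef (emul g (Zsum ms)) w = \sum_i coef (emul (Zi i) (emul g (ms i))) w.
Proof.
rewrite coef_emul_flattenr big_map; under eq_bigr do rewrite emulCA.
exact: big_enum.
Qed.

Definition Zlin (mu : 'I_d -> C) : elt := flatten [seq escale (mu i) (Zi i) | i <- enum 'I_d].

Lemma coef_Zlin mu w : coef (Zlin mu) w = \sum_i mu i * coef (Zi i) w.
Proof.
by rewrite coef_flatten big_map; under eq_bigr do rewrite coef_escale; exact: big_enum.
Qed.

Lemma coef_emul_Zlin mu f w :
  coef (emul (Zlin mu) f) w = \sum_i coef (emul (Zi i) (escale (mu i) f)) w.
Proof.
rewrite coef_emul_flattenl big_map.
under eq_bigr do rewrite coef_emul_scalel -coef_emul_scaler.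
exact: big_enum.
Qed.

(* What remains of [x^(v j)] after subtracting [sum_i mu i Z_i]; when [mu] is
   dual to [j] on [S], only rays outside [S] occur. *)
Definition ray_residue (S : {set 'I_n}) (j : 'I_n) (mu : 'I_d -> C) : elt :=
  [seq ((k == j)%:R - \sum_i mu i * (v k 0 i)%:~R, v k) |
     k <- enum 'I_n & is_ray T k && (k \notin S)].

Lemma coef_ray_residue S j mu w : coef (ray_residue S j mu) w =
  \sum_(k | is_ray T k) (if (k \notin S) && (v k == w)
                         then (k == j)%:R - \sum_i mu i * (v k 0 i)%:~R else 0).
Proof.
rewrite coefE /ray_residue big_map big_filter.
transitivity (\sum_(k | is_ray T k && (k \notin S)) (if v k == w
  then (k == j)%:R - \sum_i mu i * (v k 0 i)%:~R else 0)); first exact: big_enum_cond.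
by rewrite big_mkcondr; apply: eq_bigr => k _; case: (k \notin S).
Qed.

Lemma inR_ray_residue S j mu : inR (ray_residue S j mu).
Proof.
apply: inR_seq => p /mapP [k]; rewrite mem_filter => /andP [/andP [Hk _] _] ->.
exact: inR_term.
Qed.

Lemma mono_ray_decomp j (S : {set 'I_n}) mu : is_ray T j ->
  (forall k, k \in S -> \sum_i mu i * (v k 0 i)%:~R = (k == j)%:R) ->
  eeq (mono (v j)) (Zlin mu ++ ray_residue S j mu).
Proof.
move=> Hj Hmu w; rewrite coef_cat coef_Zlin coef_ray_residue coef_mono.
under eq_bigr do rewrite coef_Zi big_distrr.
rewrite exchange_big -big_split /= (bigD1 j) //= [X in _ + X]big1 ?addr0.
  case: (eqVneq (v j) w) => _; rewrite ?andbT ?andbF /=; last first.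
    by rewrite addr0 big1 // => i _; rewrite mulr0.
  case: (boolP (j \in S)) => jS /=; first by rewrite addr0 Hmu // eqxx.
  by rewrite eqxx addrC subrK.
move=> k /andP [Hk kj]; case: (eqVneq (v k) w) => _; rewrite ?andbT ?andbF /=.
  case: (boolP (k \in S)) => kS /=; first by rewrite addr0 Hmu // (negPf kj).
  by rewrite (negPf kj) sub0r addrN.
by rewrite addr0 big1 // => i _; rewrite mulr0.
Qed.

Definition avoids (Ss : seq {set 'I_n}) (Y : elt) : Prop :=
  forall e, e \in Y -> forall S0, S0 \in T -> in_cone S0 e.2 -> S0 \notin Ss.

(* A product [x^(v k) x^u] lies in a cone only if both factors lie in it, and
   the ray [v k] of a residue term is not in the cone over [S]. *)
Lemma avoids_emul_residue S j mu Ss Y : S \in T ->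
  avoids Ss Y -> avoids (S :: Ss) (emul (ray_residue S j mu) Y).
Proof.
move=> HS avoidY e /mem_emul [a [b [aP bY /asboolP [S2 [HS2 [Ha Hb]]] ->]]] S0 HS0 /= Hab.
move: aP => /mapP [k]; rewrite mem_filter => /andP [/andP [Hk kS] _] Ea.
rewrite Ea /= in Ha Hab.
have Hk0 : in_cone S0 (v k) := in_cone_summand HS2 HS0 Ha Hb Hab.
have Hb0 : in_cone S0 b.2 by apply: (in_cone_summand HS2 HS0 Hb Ha); rewrite addrC.
rewrite inE negb_or (avoidY b bY S0 HS0 Hb0) andbT.
apply/eqP => S0S; rewrite S0S in Hk0; move/existsP: Hk => [S' /andP [HS' kS']].
exact: (ray_notin_cone HS HS' kS' kS Hk0).
Qed.

Lemma ray_power_avoids j (Ss : seq {set 'I_n}) m : is_ray T j ->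
  all (mem T) Ss -> inM m ->
  exists ms : 'I_d -> elt, exists2 Y : elt,
    [/\ forall i, inM (ms i), inM Y & avoids Ss Y] &
    eeq (iter (size Ss) (emul (mono (v j))) m) (Zsum ms ++ Y).
Proof.
move=> Hj; elim: Ss => [|S Ss IH] /=.
  move=> _ Hm; exists (fun _ => [::]), m; first by split=> // i; exact: inM_zero.
  move=> w; rewrite coef_cat coef_Zsum big1 ?add0r // => i _.
  exact: coef_emul0.
move=> /andP [HS HSs] Hm.
have [ms' [Y' [Hms' HY' avoidY'] Heq']] := IH HSs Hm.
have [mu Hmu] := free_dual_form_ratr j (T_free HS).
exists (fun i => emul (mono (v j)) (ms' i) ++ escale (mu i) Y').
exists (emul (ray_residue S j mu) Y').
  split; [|exact: inM_mul (inR_ray_residue _ _ _) HY' | exact: avoids_emul_residue].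
  move=> i; apply: inM_add; first exact: inM_mul (inR_ray v C Hj) (Hms' i).
  exact: inM_escale.
move=> w; rewrite (eeq_emulr _ Heq') coef_emul_catr [RHS]coef_cat coef_Zsum.
rewrite (eeq_emull Y' (mono_ray_decomp Hj Hmu)) coef_emul_catl.
rewrite coef_emul_Zsum coef_emul_Zlin addrA -big_split /=; congr (_ + _).
by apply: eq_bigr => i _; rewrite [RHS]coef_emul_catr.
Qed.

Lemma ray_power_in_Zsum j m : is_ray T j -> inM m ->
  exists2 ms : 'I_d -> elt, (forall i, inM (ms i)) &
    eeq (iter #|T| (emul (mono (v j))) m) (Zsum ms).
Proof.
move=> Hj Hm.
have allT : all (mem T) (enum T) by apply/allP => S; rewrite mem_enum.
have [ms [Y [Hms HY avoidY] Heq]] := ray_power_avoids Hj allT Hm.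
exists ms => // w; rewrite cardE Heq coef_cat.
suff -> : coef Y w = 0 by rewrite addr0.
apply/eqP; apply: contraT => /[dup] /(inM_supported HY) [S HS wS].
move=> /coef_neq0_mem [e eY ew]; rewrite -ew in wS.
by move: (avoidY e eY S HS wS); rewrite mem_enum HS.
Qed.

(** * A finite spanning set modulo (Z_1, ..., Z_d) M(beta) *)

Definition box_radius : nat := \sum_(i < d) \sum_(j < n) absz (v j ord0 i).

Definition box_code := {ffun 'I_d -> 'I_(box_radius + box_radius).+1}.

Definition box_decode (c : box_code) : 'rV[int]_d :=
  \row_i ((c i : nat)%:Z - box_radius%:Z).

Lemma box_coord_bound w : in_box v T w -> forall i, (absz (w 0%R i) <= box_radius)%N.
Proof.
move=> [S [HS [q [q01 [qS Eq]]]]] i.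
have Ew : ((w 0 i)%:~R : rat) = \sum_j q j * (v j 0 i)%:~R.
  move/matrixP: Eq => /(_ 0 i); rewrite !mxE summxE => ->.
  by apply: eq_bigr => j _; rewrite !mxE.
have bound : ((absz (w 0%R i))%:R : rat) <= (\sum_j absz (v j ord0 i))%:R.
  rewrite natr_absz intr_norm Ew natr_sum.
  apply: le_trans (ler_norm_sum _ _ _) _.
  apply: ler_sum => j _; rewrite normrM natr_absz intr_norm.
  have /andP [q0 q1] := q01 j.
  by apply: ler_piMl; rewrite // ger0_norm // ltW.
rewrite ler_nat in bound; apply: leq_trans bound _.
by rewrite /box_radius (bigD1 i) //= leq_addr.
Qed.

Lemma box_decode_onto w : in_box v T w -> exists c, box_decode c = w.
Proof.
move=> Hw; exists [ffun i =>
  inord (absz (w 0%R i + box_radius%:Z)%R) : 'I_(box_radius + box_radius).+1].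
apply/matrixP => i0 i; rewrite (ord1 i0) !mxE ffunE.
have bound := box_coord_bound Hw i; rewrite inordK; lia.
Qed.

Definition gen_elt (w : 'rV[int]_d) (J : {set 'I_n}) : elt :=
  foldr emul (mono w) [seq mono (v j) | j <- enum 'I_n & j \in J].

(* The test keeps every value of [gen_of] inside M(beta). *)
Definition gen_of (c : box_code) (J : {set 'I_n}) : elt :=
  if `[< gen v T beta (gen_elt (box_decode c) J) >] then gen_elt (box_decode c) J else [::].

Lemma inM_gen_of c J : inM (gen_of c J).
Proof. by rewrite /gen_of; case: asboolP => H; [exact: inM_gen | exact: inM_zero]. Qed.

Lemma gen_of_onto f : gen v T beta f -> exists c J, gen_of c J = f.
Proof.
move=> Hf; case: (Hf) => w [r [Hb [_ [_ Ef]]]].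
have [c Ec] := box_decode_onto Hb.
set J := [set j | (r j < 0) && is_ray T j && ~~ `[< ray_face v T j w >]].
have EJ : gen_elt (box_decode c) J = f.
  by rewrite Ef Ec /gen_elt; congr foldr; congr map; apply: eq_filter => j; rewrite inE.
by exists c, J; rewrite /gen_of EJ; case: asboolP.
Qed.

Definition ray_powers (s : seq 'I_n) (e : 'I_n -> nat) (g : elt) : elt :=
  foldr (fun k h => if is_ray T k then iter (e k) (emul (mono (v k))) h else h) g s.

Lemma inM_iter_ray k j g : is_ray T j -> inM g -> inM (iter k (emul (mono (v j))) g).
Proof. by move=> Hj Hg; elim: k => //= k IH; apply: inM_mul (inR_ray v C Hj) IH. Qed.

Lemma inM_ray_powers s e g : inM g -> inM (ray_powers s e g).
Proof.
move=> Hg; elim: s => //= k s IH.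
by case: ifP => // Hk; apply: inM_iter_ray.
Qed.

Lemma eeq_iter k u g g' : eeq g g' -> eeq (iter k (emul u) g) (iter k (emul u) g').
Proof. by move=> E; elim: k => //= k IH w; rewrite (eeq_emulr _ IH). Qed.

Lemma iter_emulCA k u u' h :
  eeq (emul u (iter k (emul u') h)) (iter k (emul u') (emul u h)).
Proof. by elim: k => //= k IH w; rewrite emulCA (eeq_emulr _ IH). Qed.

Lemma iter_emulC m k u u' h :
  eeq (iter m (emul u) (iter k (emul u') h)) (iter k (emul u') (iter m (emul u) h)).
Proof. by elim: m => //= m IH w; rewrite (eeq_emulr _ IH) iter_emulCA. Qed.

Lemma ray_powers0 s e g : (forall k, e k = 0%N) -> ray_powers s e g = g.
Proof. by move=> e0; elim: s => //= k s ->; rewrite e0; case: ifP. Qed.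

Lemma ray_powers_notin s j e e' g : j \notin s -> (forall k, k != j -> e' k = e k) ->
  ray_powers s e' g = ray_powers s e g.
Proof.
move=> js He; elim: s js => //= k s IH; rewrite inE negb_or => /andP [jk js].
by rewrite IH // He // eq_sym.
Qed.

Lemma ray_powers_shift s j e e' m g : uniq s -> j \in s -> is_ray T j ->
  (forall k, k != j -> e' k = e k) -> e' j = (m + e j)%N ->
  eeq (ray_powers s e' g) (iter m (emul (mono (v j))) (ray_powers s e g)).
Proof.
move=> Us js Hj He Ej; elim: s Us js => //= k s IH /andP [ks Us].
rewrite inE => /orP [/eqP Ekj|js].
  by subst k; rewrite (ray_powers_notin g ks He) Hj Ej iterD => w.
have kj : k != j by apply: contraNneq ks => ->.
case: ifP => Hk w; last exact: IH.
by rewrite He // (eeq_iter _ _ (IH Us js)) iter_emulC.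
Qed.

Local Notation exponents := {ffun 'I_n -> 'I_#|T|}.

Definition span_index := (box_code * {set 'I_n} * exponents)%type.

Definition span_elt (x : span_index) : elt :=
  ray_powers (enum 'I_n) (fun k => x.2 k) (gen_of x.1.1 x.1.2).

Definition span_size := #|{: span_index}|.

Definition span_basis (t : 'I_span_size) : elt := span_elt (enum_val t).

Definition span_comb (c : 'I_span_size -> C) (ms : 'I_d -> elt) : elt :=
  flatten ([seq escale (c t) (span_basis t) | t <- enum 'I_span_size] ++
           [seq emul (Zi i) (ms i) | i <- enum 'I_d]).

Lemma coef_span_comb c ms w : coef (span_comb c ms) w =
  \sum_t c t * coef (span_basis t) w + \sum_i coef (emul (Zi i) (ms i)) w.
Proof.
rewrite /span_comb coef_flatten big_cat !big_map /=; congr (_ + _).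
by apply: eq_bigr => t _; exact: coef_escale.
Qed.

Definition spanned (f : elt) : Prop :=
  exists c ms, (forall i, inM (ms i)) /\ eeq f (span_comb c ms).

Lemma spanned_eeq f g : spanned f -> eeq f g -> spanned g.
Proof. by move=> [c [ms [H E]]] Efg; exists c, ms; split => // w; rewrite -Efg E. Qed.

Lemma spanned_cat f g : spanned f -> spanned g -> spanned (f ++ g).
Proof.
move=> [c [ms [H E]]] [c' [ms' [H' E']]].
exists (fun t => c t + c' t), (fun i => ms i ++ ms' i); split.
  by move=> i; apply: inM_add.
move=> w; rewrite coef_cat E E' !coef_span_comb.
under [X in _ = X + _]eq_bigr do rewrite mulrDl.
under [X in _ = _ + X]eq_bigr do rewrite coef_emul_catr.
by rewrite !big_split /= addrACA.
Qed.

Lemma spanned_escale k f : spanned f -> spanned (escale k f).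
Proof.
move=> [c [ms [H E]]].
exists (fun t => k * c t), (fun i => escale k (ms i)); split.
  by move=> i; apply: inM_escale.
move=> w; rewrite coef_escale E !coef_span_comb mulrDr !big_distrr /=.
congr (_ + _); apply: eq_bigr => i _; first by rewrite mulrA.
by rewrite coef_emul_scaler.
Qed.

Lemma spanned_nil : spanned [::].
Proof.
exists (fun _ => 0), (fun _ => [::]); split; first by move=> i; exact: inM_zero.
move=> w; rewrite coef_nil coef_span_comb !big1 ?addr0 // => i _.
  exact: coef_emul0.
by rewrite mul0r.
Qed.

Lemma spanned_flatten (L : seq elt) : (forall l, l \in L -> spanned l) -> spanned (flatten L).
Proof.
elim: L => [|l L IH] H /=; first exact: spanned_nil.
apply: spanned_cat; first by apply: H; rewrite inE eqxx.
by apply: IH => l' Hl'; apply: H; rewrite inE Hl' orbT.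
Qed.

Lemma spanned_span_elt x : spanned (span_elt x).
Proof.
exists (fun t => (t == enum_rank x)%:R), (fun _ => [::]).
split; first by move=> i; exact: inM_zero.
move=> w; rewrite coef_span_comb [X in _ = _ + X]big1 ?addr0 => [|i _]; last first.
  exact: coef_emul0.
rewrite (bigD1 (enum_rank x)) //= eqxx mul1r big1 ?addr0 => [|t /negPf ->]; last first.
  by rewrite mul0r.
by rewrite /span_basis enum_rankK.
Qed.

Lemma spanned_Zsum ms : (forall i, inM (ms i)) -> spanned (Zsum ms).
Proof.
move=> Hms; exists (fun _ => 0), ms; split => // w.
by rewrite [RHS]coef_span_comb coef_Zsum [X in _ = X + _]big1 ?add0r // => t _; rewrite mul0r.
Qed.

Lemma spanned_Z i m : inM m -> spanned (emul (Zi i) m).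
Proof.
move=> Hm; apply: (spanned_eeq (spanned_Zsum (ms := fun k => if k == i then m else [::]) _)).
  by move=> k; case: eqP => _ //; exact: inM_zero.
move=> w; rewrite coef_Zsum (bigD1 i) //= eqxx big1 ?addr0 // => k /negPf ->.
exact: coef_emul0.
Qed.

Lemma spanned_emul_span r : inR r -> (forall x, spanned (emul r (span_elt x))) ->
  forall f, spanned f -> spanned (emul r f).
Proof.
move=> Hr H f [c [ms [Hms E]]].
apply: (@spanned_eeq (flatten
  ([seq escale (c t) (emul r (span_basis t)) | t <- enum 'I_span_size] ++
   [seq emul (Zi i) (emul r (ms i)) | i <- enum 'I_d]))).
  apply: spanned_flatten => l; rewrite mem_cat => /orP [/mapP [t _ ->] | /mapP [i _ ->]].
    exact/spanned_escale/H.
  exact/spanned_Z/(inM_mul Hr (Hms i)).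
move=> w; rewrite [RHS](eeq_emulr _ E) /span_comb coef_emul_flattenr coef_flatten.
rewrite !big_cat !big_map /=; congr (_ + _); apply: eq_bigr => t _.
  by rewrite coef_emul_scaler coef_escale.
by rewrite emulCA.
Qed.

(* Raising an exponent past [#|T| - 1] produces [x^(v j)^#|T|] times an element
   of M(beta), which lies in (Z_1, ..., Z_d) M(beta). *)
Lemma spanned_ray j x : is_ray T j -> spanned (emul (mono (v j)) (span_elt x)).
Proof.
case: x => [[c J] a] Hj; rewrite /span_elt /=.
set g := gen_of c J.
have shift e e' m :=
  @ray_powers_shift (enum 'I_n) j e e' m g (enum_uniq _) (mem_enum _ j) Hj.
case: (ltnP (a j).+1 #|T|) => Ha.
  pose a' : exponents := [ffun k => if k == j then Ordinal Ha else a k].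
  apply: (spanned_eeq (spanned_span_elt ((c, J), a'))) => w.
  rewrite /span_elt /= (shift (fun k => a k) _ 1) // => [k kj|].
    by rewrite ffunE (negPf kj).
  by rewrite ffunE eqxx.
have aT : (a j).+1 = #|T| by apply/eqP; rewrite eqn_leq Ha ltn_ord.
have T0 : (0 < #|T|)%N by rewrite -aT.
pose a0 : exponents := [ffun k => if k == j then Ordinal T0 else a k].
have {}shift : eeq (ray_powers (enum 'I_n) (fun k => a k) g)
    (iter (a j) (emul (mono (v j))) (ray_powers (enum 'I_n) (fun k => a0 k) g)).
  apply: shift => [k kj|]; first by rewrite ffunE (negPf kj).
  by rewrite ffunE eqxx addn0.
have Hg : inM (ray_powers (enum 'I_n) (fun k => a0 k) g).
  exact/inM_ray_powers/inM_gen_of.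
have [ms Hms Ems] := ray_power_in_Zsum Hj Hg.
apply: (spanned_eeq (spanned_Zsum Hms)) => w.
by rewrite (eeq_emulr _ shift) -[in LHS]Ems -iterS aT.
Qed.

Lemma spanned_const c x : spanned (emul [:: (c, 0)] (span_elt x)).
Proof.
apply: (spanned_eeq (spanned_escale c (spanned_span_elt x))) => w.
by rewrite emul_const //; apply/inM_supported/inM_ray_powers/inM_gen_of.
Qed.

Lemma spanned_emul r f : inR r -> spanned f -> spanned (emul r f).
Proof.
move=> Hr; elim: Hr f => {r} [c|j Hj|f g _ IHf _ IHg|f g _ IHf _ IHg|f g _ IHf E] h Qh.
- by apply: spanned_emul_span (inR_const v T c) _ _ Qh => x; exact: spanned_const.
- by apply: spanned_emul_span (inR_ray v C Hj) _ _ Qh => x; exact: spanned_ray.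
- apply: spanned_eeq (spanned_cat (IHf h Qh) (IHg h Qh)) _.
  by move=> w; rewrite coef_cat coef_emul_catl.
- by apply: spanned_eeq (IHf _ (IHg h Qh)) _ => w; rewrite emulA.
- by apply: spanned_eeq (IHf h Qh) _; apply: eeq_emull.
Qed.

Lemma inM_spanned f : inM f -> spanned f.
Proof.
elim=> {f} [|f Hf|f g _ Hf _ Hg|r f Hr _ Hf|f g _ Hf E].
- exact: spanned_nil.
- have [c [J <-]] := gen_of_onto Hf.
  have T0 : (0 < #|T|)%N.
    by case: Hf => w [_ [[S [ST _]] _]]; apply/card_gt0P; exists S.
  apply: (spanned_eeq (spanned_span_elt ((c, J), [ffun _ => Ordinal T0]))) => w.
  by rewrite /span_elt /= ray_powers0 // => k; rewrite ffunE.
- exact: spanned_cat.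
- exact: spanned_emul.
- exact: spanned_eeq Hf E.
Qed.

Lemma quotient_finite_dim_of_simplices : quotient_finite_dim v T C beta.
Proof.
exists span_size, span_basis; split.
  by move=> t; apply/inM_ray_powers/inM_gen_of.
by move=> f /inM_spanned [c [ms [Hms E]]]; exists c, ms.
Qed.

End FiniteQuotient.

Theorem proposition2p16 (R : realType) (d n : nat) (v : 'I_n -> 'rV[int]_d)
    (T : {set {set 'I_n}}) (beta : 'rV[int]_d) :
  good_config v -> regular_triangulation v T ->
  quotient_finite_dim v T R[i] beta.
Proof.
move=> _ [simplices [_ [meet _]]].
by apply: quotient_finite_dim_of_simplices => // S /simplices [_ free].
Qed.
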